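(* Let $\mathbf{F}\in\{\mathbf{R},\mathbf{C}\}$, let $A_1,\dots,A_n\in\mathbf{H}_d$ be positive semidefinite, let $Z_*\in\mathbf{H}_d$ be positive semidefinite of rank $r\ge1$, let $\xi\in\mathbf{R}^n$ and $y=\mathcal{A}(Z_* )+\xi$. Let $X_*\in\mathbf{F}^{d\times r}$ satisfy $Z_*=X_*X_*^*$. Let $X\in\mathbf{F}^{d\times p}$ be a second-order critical point of $f_p(X)=\|y-\mathcal{A}(XX^* )\|^2$. Then for every $R\in\mathbf{F}^{p\times r}$, $$\|\mathcal{A}(XX^*-Z_* )\|^2\le\langle\xi,\mathcal{A}(XX^*-Z_* )\rangle+\frac{2}{p+2}\big\langle y,\mathcal{A}((X_*-XR)(X_*-XR)^* )\big\rangle\le\langle\xi,\mathcal{A}(XX^*-Z_* )\rangle+\frac{2\|\mathcal{A}^*(y)\|_{\mathrm{op}}}{p+2}\|X_*-XR\|_F^2 .$$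
   Context: $\mathbf{H}_d$: $d\times d$ Hermitian matrices over $\mathbf{F}$ with real Frobenius inner product $\langle A,B\rangle=\operatorname{Re}\operatorname{tr}(A^*B)$. $\mathcal{A}(S)=(\langle A_1,S\rangle,\dots,\langle A_n,S\rangle)\in\mathbf{R}^n$, $\mathcal{A}^*(z)=\sum_iz_iA_i$. A second-order critical point is a point where the gradient is zero and the Hessian is positive semidefinite (in the complex case, with respect to the real and imaginary parts of $X$). *)

From HB Require Import structures.
From mathcomp Require Import all_boot all_order all_algebra.
From mathcomp Require Import all_classical all_reals all_analysis.
From mathcomp Require Import complex.
Set Implicit Arguments. Unset Strict Implicit. Unset Printing Implicit Defensive.
Import Order.TTheory GRing.Theory Num.Theory.
Local Open Scope ring_scope.
Local Open Scope classical_set_scope.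

(* Everything is parameterised by the scalar field F in {R, C}, given together
   with its conjugation conjF, its real part reF : F -> R and the embedding
   embF : R -> F of the reals.  The two instances used are
     F = R,    conjF = id,    reF = id,   embF = id
     F = R[i], conjF = conjc, reF = Re,   embF = (fun t => t%:C). *)
Section Generic.
Variables (R : realType) (F : numFieldType)
  (conjF : F -> F) (reF : F -> R) (embF : R -> F).

Definition adj m n (A : 'M[F]_(m, n)) : 'M[F]_(n, m) := map_mx conjF A^T.

Definition inner m n (A B : 'M[F]_(m, n)) : R := reF (\tr (adj A *m B)).

Definition frob m n (A : 'M[F]_(m, n)) : R := Num.sqrt (inner A A).

Definition hermitian d (A : 'M[F]_d) : Prop := adj A = A.

Definition psd d (A : 'M[F]_d) : Prop :=
  hermitian A /\ forall v : 'cV[F]_d, 0 <= reF ((adj v *m A *m v) 0 0).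

Definition meas n d (As : 'I_n -> 'M[F]_d) (S : 'M[F]_d) : 'I_n -> R :=
  fun i => inner (As i) S.

Definition measadj n d (As : 'I_n -> 'M[F]_d) (z : 'I_n -> R) : 'M[F]_d :=
  \sum_(i < n) embF (z i) *: As i.

Definition dotR n (u v : 'I_n -> R) : R := \sum_(i < n) u i * v i.
Definition sqnorm n (u : 'I_n -> R) : R := dotR u u.

Definition vnorm d (v : 'cV[F]_d) : R := Num.sqrt (reF ((adj v *m v) 0 0)).

Definition opnorm d (M : 'M[F]_d) : R :=
  sup [set vnorm (M *m v) | v in [set v : 'cV[F]_d | vnorm v = 1]].

Definition fp n d p (As : 'I_n -> 'M[F]_d) (y : 'I_n -> R) (X : 'M[F]_(d, p)) : R :=
  sqnorm (fun i => y i - meas As (X *m adj X) i).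

(* second-order critical point of f, with f viewed as a function of the real
   (and imaginary) parts of X: in every (real) direction U the first
   directional derivative vanishes and the second one is nonnegative, i.e.
   gradient zero and Hessian positive semidefinite. *)
Definition second_order_critical d p (f : 'M[F]_(d, p) -> R) (X : 'M[F]_(d, p)) : Prop :=
  forall U : 'M[F]_(d, p),
    let g := fun t : R => f (X + embF t *: U) in
    [/\ (forall t, derivable g t 1),
        g^`() 0 = 0,
        (forall t, derivable g^`() t 1) &
        0 <= g^`()^`() 0].

Definition lemma1_claim : Prop :=
  forall (d n r p : nat) (As : 'I_n -> 'M[F]_d) (Zs : 'M[F]_d)
         (xi y : 'I_n -> R) (Xs : 'M[F]_(d, r)) (X : 'M[F]_(d, p)),
    (forall i, psd (As i)) ->
    psd Zs -> \rank Zs = r -> (1 <= r)%N ->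
    y = (fun i => meas As Zs i + xi i) ->
    Zs = Xs *m adj Xs ->
    second_order_critical (fp As y) X ->
    forall Rm : 'M[F]_(p, r),
      let D := meas As (X *m adj X - Zs) in
      let E := Xs - X *m Rm in
      sqnorm D <= dotR xi D + 2 / (p%:R + 2) * dotR y (meas As (E *m adj E))
      /\
      dotR xi D + 2 / (p%:R + 2) * dotR y (meas As (E *m adj E))
        <= dotR xi D + 2 * opnorm (measadj As y) / (p%:R + 2) * frob E ^+ 2.

End Generic.

From Pilot Require Import Defs.
From mathcomp Require Import all_boot all_order all_algebra.
From mathcomp Require Import all_classical all_reals all_analysis.
From mathcomp Require Import complex ring lra.
Set Implicit Arguments. Unset Strict Implicit. Unset Printing Implicit Defensive.
Import Order.TTheory GRing.Theory.
Local Open Scope ring_scope.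

(* Let r = y - A(X X^* ) be the residual and E = X_* - X R.  The first-order
   condition in the directions X, E R^* and X R R^* turns ||A(X X^* - Z_* )||^2
   into <xi, A(X X^* - Z_* )> + <r, A(E E^* )>.  The second-order condition in
   the rank-one direction E e_j e_k^*, together with Cauchy-Schwarz for the
   semidefinite forms (P, Q) |-> Re tr(P^* A_i Q), bounds the contribution of
   the j-th column of E by that of the k-th column of X; summing over all j and
   the p columns k gives 2p <r, A(E E^* )> <= 4 <A(E E^* ), A(X X^* )>, whose
   right-hand side is 4 (<y, A(E E^* )> - <r, A(E E^* )>).  Finally
   <y, A(E E^* )> = Re tr(E^* A^*(y) E) <= ||A^*(y)||_op ||E||_F^2. *)

Section ScalarField.
Import Num.Theory.
Variables (R : realType) (F : numFieldType)
  (conjF : F -> F) (reF : F -> R) (embF : R -> F).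
Hypothesis conjD : {morph conjF : a b / a + b}.
Hypothesis conjM : {morph conjF : a b / a * b}.
Hypothesis conjK : involutive conjF.
Hypothesis conj_emb : forall t, conjF (embF t) = embF t.
Hypothesis reD : {morph reF : a b / a + b}.
Hypothesis re_embM : forall t a, reF (embF t * a) = t * reF a.
Hypothesis re_conj : forall a, reF (conjF a) = reF a.
Hypothesis re_normsq_ge0 : forall a, 0 <= reF (conjF a * a).
Hypothesis normsq_real : forall a, conjF a * a = embF (reF (conjF a * a)).

Local Notation adj := (Defs.adj conjF).
Local Notation inner := (Defs.inner conjF reF).
Local Notation meas := (Defs.meas conjF reF).
Local Notation vnorm := (Defs.vnorm conjF reF).
Local Notation psd := (Defs.psd conjF reF).
Local Notation hermitian := (Defs.hermitian conjF).

Lemma conj0 : conjF 0 = 0.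
Proof. by apply/(addrI (conjF 0)); rewrite -conjD !addr0. Qed.

Lemma conj1 : conjF 1 = 1.
Proof. by rewrite -[RHS](conjK 1) -{2}[conjF 1]mul1r conjM conjK mulr1. Qed.

Lemma conj_sum (I : Type) (s : seq I) (P : pred I) (f : I -> F) :
  conjF (\sum_(i <- s | P i) f i) = \sum_(i <- s | P i) conjF (f i).
Proof. exact: (big_morph _ conjD conj0). Qed.

Lemma re0 : reF 0 = 0.
Proof. by apply/(addrI (reF 0)); rewrite -reD !addr0. Qed.

Lemma reN a : reF (- a) = - reF a.
Proof. by apply/(addrI (reF a)); rewrite -reD !subrr re0. Qed.

Lemma re_sum (I : Type) (s : seq I) (P : pred I) (f : I -> F) :
  reF (\sum_(i <- s | P i) f i) = \sum_(i <- s | P i) reF (f i).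
Proof. exact: (big_morph _ reD re0). Qed.

Lemma adjD m n (A B : 'M[F]_(m, n)) : adj (A + B) = adj A + adj B.
Proof. by apply/matrixP => i j; rewrite !mxE conjD. Qed.

Lemma adjZ m n c (A : 'M[F]_(m, n)) : adj (c *: A) = conjF c *: adj A.
Proof. by apply/matrixP => i j; rewrite !mxE conjM. Qed.

Lemma adj_embZ m n t (A : 'M[F]_(m, n)) : adj (embF t *: A) = embF t *: adj A.
Proof. by rewrite adjZ conj_emb. Qed.

Lemma adjK m n (A : 'M[F]_(m, n)) : adj (adj A) = A.
Proof. by apply/matrixP => i j; rewrite !mxE conjK. Qed.

Lemma adj_mul m n k (A : 'M[F]_(m, n)) (B : 'M[F]_(n, k)) :
  adj (A *m B) = adj B *m adj A.
Proof.
apply/matrixP => i j; rewrite !mxE conj_sum; apply: eq_bigr => l _.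
by rewrite !mxE conjM mulrC.
Qed.

Lemma adj0 m n : adj (0 : 'M[F]_(m, n)) = 0.
Proof. by apply/matrixP => i j; rewrite !mxE conj0. Qed.

Lemma adj_sum m n (I : finType) (f : I -> 'M[F]_(m, n)) :
  adj (\sum_i f i) = \sum_i adj (f i).
Proof. exact: (big_morph _ (@adjD m n) (@adj0 m n)). Qed.

Lemma adj1 n : adj (1%:M : 'M[F]_n) = 1%:M.
Proof.
by apply/matrixP => i j; rewrite !mxE eq_sym; case: (_ == _); rewrite ?conj1 ?conj0.
Qed.

Lemma adj_delta m n (i : 'I_m) (j : 'I_n) :
  adj (delta_mx i j : 'M[F]_(m, n)) = delta_mx j i.
Proof.
apply/matrixP => a b; rewrite !mxE.
by case: (_ == _); case: (_ == _); rewrite /= ?conj1 ?conj0.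
Qed.

Lemma re_mxtrace_adj n (A : 'M[F]_n) : reF (\tr (adj A)) = reF (\tr A).
Proof.
rewrite /mxtrace -re_conj conj_sum; congr (reF _).
by apply: eq_bigr => i _; rewrite !mxE.
Qed.

Lemma innerD m n (A S T : 'M[F]_(m, n)) : inner A (S + T) = inner A S + inner A T.
Proof. by rewrite /Defs.inner mulmxDr mxtraceD reD. Qed.

Lemma innerN m n (A S : 'M[F]_(m, n)) : inner A (- S) = - inner A S.
Proof. by rewrite /Defs.inner mulmxN linearN reN. Qed.

Lemma innerB m n (A S T : 'M[F]_(m, n)) : inner A (S - T) = inner A S - inner A T.
Proof. by rewrite innerD innerN. Qed.

Lemma inner_embZ m n t (A S : 'M[F]_(m, n)) : inner A (embF t *: S) = t * inner A S.
Proof. by rewrite /Defs.inner -scalemxAr mxtraceZ re_embM. Qed.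

Lemma inner_sum m n (A : 'M[F]_(m, n)) (I : finType) (f : I -> 'M[F]_(m, n)) :
  inner A (\sum_i f i) = \sum_i inner A (f i).
Proof. by rewrite /Defs.inner mulmx_sumr raddf_sum re_sum. Qed.

Definition hform d m (B : 'M[F]_d) (P Q : 'M[F]_(d, m)) : R :=
  reF (\tr (adj P *m B *m Q)).

Lemma hformC d m (B : 'M[F]_d) (P Q : 'M[F]_(d, m)) :
  hermitian B -> hform B Q P = hform B P Q.
Proof. by move=> hB; rewrite /hform -[RHS]re_mxtrace_adj !adj_mul adjK hB mulmxA. Qed.

Lemma hformDl d m (B : 'M[F]_d) (P P' Q : 'M[F]_(d, m)) :
  hform B (P + P') Q = hform B P Q + hform B P' Q.
Proof. by rewrite /hform adjD !mulmxDl mxtraceD reD. Qed.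

Lemma hformDr d m (B : 'M[F]_d) (P Q Q' : 'M[F]_(d, m)) :
  hform B P (Q + Q') = hform B P Q + hform B P Q'.
Proof. by rewrite /hform !mulmxDr mxtraceD reD. Qed.

Lemma hform_embZl d m (B : 'M[F]_d) t (P Q : 'M[F]_(d, m)) :
  hform B (embF t *: P) Q = t * hform B P Q.
Proof. by rewrite /hform adj_embZ -!scalemxAl mxtraceZ re_embM. Qed.

Lemma hform_embZr d m (B : 'M[F]_d) t (P Q : 'M[F]_(d, m)) :
  hform B P (embF t *: Q) = t * hform B P Q.
Proof. by rewrite /hform -!scalemxAr mxtraceZ re_embM. Qed.

Lemma hform_mulr d m (B : 'M[F]_d) (P Q : 'M[F]_(d, m)) (C : 'M[F]_m) :
  hform B (P *m C) Q = hform B P (Q *m adj C).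
Proof. by rewrite /hform adj_mul -!mulmxA [in LHS]mxtrace_mulC !mulmxA. Qed.

Lemma inner_hform d m (B : 'M[F]_d) (P Q : 'M[F]_(d, m)) :
  hermitian B -> inner B (Q *m adj P) = hform B P Q.
Proof. by move=> hB; rewrite /Defs.inner /hform hB mulmxA mxtrace_mulC mulmxA. Qed.

Lemma inner_symprod d m (B : 'M[F]_d) (P Q : 'M[F]_(d, m)) : hermitian B ->
  inner B (P *m adj Q + Q *m adj P) = 2 * hform B Q P.
Proof.
by move=> hB; rewrite innerD !inner_hform // (hformC _ _ hB) mulr2n mulrDl mul1r.
Qed.

Lemma mxtrace_adj_cols d m (B : 'M[F]_d) (P Q : 'M[F]_(d, m)) :
  \tr (adj P *m B *m Q) = \sum_j (adj (col j P) *m B *m col j Q) 0 0.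
Proof.
apply: eq_bigr => j _; rewrite !mxE; apply: eq_bigr => k _.
by rewrite !mxE; congr (_ * _); apply: eq_bigr => l _; rewrite !mxE.
Qed.

Lemma hform_ge0 d m (B : 'M[F]_d) (P : 'M[F]_(d, m)) : psd B -> 0 <= hform B P P.
Proof.
by case=> _ hB; rewrite /hform mxtrace_adj_cols re_sum; apply: sumr_ge0 => j _.
Qed.

Lemma discr_le_of_quad_ge0 (a b c : R) :
  (forall t, 0 <= a + 2 * b * t + c * t ^+ 2) -> 0 <= c -> b ^+ 2 <= a * c.
Proof.
move=> quad_ge0; rewrite le0r => /orP[/eqP c0 | c_gt0].
  have [-> | b_neq0] := eqVneq b 0; first by rewrite c0 expr0n mulr0.
  have := quad_ge0 (- (a + 1) / (2 * b)); rewrite c0 mul0r addr0.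
  have -> : a + 2 * b * (- (a + 1) / (2 * b)) = -1 by field.
  by rewrite ler0N1.
have := quad_ge0 (- b / c).
have -> : a + 2 * b * (- b / c) + c * (- b / c) ^+ 2 = (a * c - b ^+ 2) / c.
  by field; rewrite gt_eqF.
by rewrite pmulr_lge0 ?invr_gt0 // subr_ge0.
Qed.

Lemma hform_CauchySchwarz d m (B : 'M[F]_d) (P Q : 'M[F]_(d, m)) :
  psd B -> hform B P Q ^+ 2 <= hform B P P * hform B Q Q.
Proof.
move=> psdB; apply: discr_le_of_quad_ge0; last exact: hform_ge0.
move=> t; have := hform_ge0 (P + embF t *: Q) psdB.
rewrite !hformDl !hformDr !hform_embZl !hform_embZr (hformC _ _ psdB.1).
by congr (0 <= _); ring.
Qed.

Lemma dotRC n (u v : 'I_n -> R) : dotR u v = dotR v u.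
Proof. by apply: eq_bigr => i _; rewrite mulrC. Qed.

Lemma dotR_sumr n (I : finType) (u : 'I_n -> R) (v : I -> 'I_n -> R) :
  dotR u (fun i => \sum_j v j i) = \sum_j dotR u (v j).
Proof. by rewrite /dotR exchange_big; apply: eq_bigr => i _; rewrite mulr_sumr. Qed.

Lemma dotR_suml n (I : finType) (u : I -> 'I_n -> R) (v : 'I_n -> R) :
  dotR (fun i => \sum_j u j i) v = \sum_j dotR (u j) v.
Proof. by rewrite dotRC dotR_sumr; apply: eq_bigr => j _; rewrite dotRC. Qed.

Lemma dotR_sum_pairs_le n r p (z : 'I_n -> R)
    (u : 'I_r -> 'I_n -> R) (v : 'I_p -> 'I_n -> R) :
  (forall j k, 2 * dotR z (u j) <= 4 * dotR (u j) (v k)) ->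
  2 * p%:R * dotR z (fun i => \sum_j u j i) <=
  4 * dotR (fun i => \sum_j u j i) (fun i => \sum_k v k i).
Proof.
move=> uv; rewrite dotR_sumr dotR_suml !mulr_sumr; apply: ler_sum => j _.
rewrite dotR_sumr [in X in _ <= X]mulr_sumr.
apply: le_trans _ (ler_sum _ (fun k _ => uv j k)).
by rewrite sumr_const card_ord mulrAC mulr_natr.
Qed.

Lemma meas_sum n d (As : 'I_n -> 'M[F]_d) (I : finType) (f : I -> 'M[F]_d) :
  meas As (\sum_j f j) = (fun i => \sum_j meas As (f j) i).
Proof. by apply/funext => i; exact: inner_sum. Qed.

Lemma sum_outer_cols d m (Y : 'M[F]_(d, m)) :
  \sum_j (Y *m delta_mx j j) *m adj (Y *m delta_mx j j) = Y *m adj Y.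
Proof.
under eq_bigr do rewrite adj_mul adj_delta mulmxA -[Y *m _ *m _]mulmxA mul_delta_mx.
by rewrite -mulmx_suml -mulmx_sumr -mx1_sum_delta mulmx1.
Qed.

Lemma outer_rank_one d m p (Y : 'M[F]_(d, m)) (j : 'I_m) (k : 'I_p) :
  (Y *m delta_mx j k) *m adj (Y *m delta_mx j k) =
  (Y *m delta_mx j j) *m adj (Y *m delta_mx j j).
Proof.
by rewrite !adj_mul !adj_delta !mulmxA -!(mulmxA Y) !mul_delta_mx.
Qed.

Lemma dotR_meas n d (As : 'I_n -> 'M[F]_d) (z : 'I_n -> R) (S : 'M[F]_d) :
  dotR z (meas As S) = inner (measadj embF As z) S.
Proof.
rewrite /Defs.inner /measadj adj_sum mulmx_suml.
rewrite (big_morph _ (@mxtraceD _ _) (@mxtrace0 _ _)) re_sum.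
by apply: eq_bigr => i _; rewrite adj_embZ -scalemxAl mxtraceZ re_embM.
Qed.

Lemma derive_sum_sqr_quad n (a b c : 'I_n -> R) :
  let g t := \sum_i (a i + b i * t + c i * t ^+ 2) ^+ 2 in
  derive1 g 0 = 2 * \sum_i a i * b i /\
  derive1 (derive1 g) 0 = 2 * \sum_i (b i ^+ 2 + 2 * a i * c i).
Proof.
move=> g; pose q i : {poly R} := (a i)%:P + b i *: 'X + c i *: 'X^2.
have -> : g = horner (\sum_i q i ^+ 2).
  by apply/funext => t; rewrite horner_sum; apply: eq_bigr => i _; rewrite !hornerE.
rewrite -!derivE !(big_morph _ (@derivD _) (@deriv0 _)) !horner_sum !mulr_sumr.
by split; apply: eq_bigr => i _; rewrite /q !expr2 !poly.derivE !hornerE /=; ring.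
Qed.

Local Notation fp := (Defs.fp conjF reF).
Local Notation second_order_critical := (Defs.second_order_critical embF).

Definition residual n d p (As : 'I_n -> 'M[F]_d) (y : 'I_n -> R) (X : 'M[F]_(d, p)) :
  'I_n -> R := fun i => y i - meas As (X *m adj X) i.

Lemma mul_adj_line d p t (X U : 'M[F]_(d, p)) :
  (X + embF t *: U) *m adj (X + embF t *: U) =
  X *m adj X + embF t *: (X *m adj U + U *m adj X) + embF t *: (embF t *: (U *m adj U)).
Proof.
rewrite adjD adj_embZ mulmxDl !mulmxDr -!scalemxAr -!scalemxAl scalerDr.
by rewrite !addrA.
Qed.

Section SecondOrderCritical.
Variables (n d p : nat) (As : 'I_n -> 'M[F]_d) (y : 'I_n -> R) (X : 'M[F]_(d, p)).
Hypothesis X_crit : second_order_critical (fp As y) X.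

Lemma fp_line_derive (U : 'M[F]_(d, p)) :
  let g t := fp As y (X + embF t *: U) in
  let T := meas As (X *m adj U + U *m adj X) in
  derive1 g 0 = - 2 * dotR (residual As y X) T /\
  derive1 (derive1 g) 0 =
    2 * (sqnorm T - 2 * dotR (residual As y X) (meas As (U *m adj U))).
Proof.
move=> g T; set r := residual As y X; set W := meas As (U *m adj U).
have -> : g = fun t => \sum_i (r i + (- T i) * t + (- W i) * t ^+ 2) ^+ 2.
  apply/funext => t; rewrite /g /Defs.fp /sqnorm /dotR; apply: eq_bigr => i _.
  rewrite mul_adj_line /r /T /W /residual /Defs.meas !(innerD, inner_embZ); ring.
have [-> ->] := derive_sum_sqr_quad r (fun i => - T i) (fun i => - W i).
rewrite /sqnorm /dotR; split.
  by rewrite mulNr -mulrN -sumrN; congr (_ * _); apply: eq_bigr => i _; ring.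
by congr (_ * _); rewrite mulr_sumr -sumrB; apply: eq_bigr => i _; ring.
Qed.

Lemma soc_first_order (U : 'M[F]_(d, p)) :
  dotR (residual As y X) (meas As (X *m adj U + U *m adj X)) = 0.
Proof.
have [_ + _ _] := X_crit U; have [-> _] := fp_line_derive U.
by move/eqP; rewrite mulf_eq0 oppr_eq0 pnatr_eq0 => /eqP.
Qed.

Lemma soc_second_order (U : 'M[F]_(d, p)) :
  2 * dotR (residual As y X) (meas As (U *m adj U)) <=
  sqnorm (meas As (X *m adj U + U *m adj X)).
Proof.
have [_ _ _ +] := X_crit U; have [_ ->] := fp_line_derive U.
by rewrite pmulr_rge0 // subr_ge0.
Qed.

Lemma soc_first_order_herm (C : 'M[F]_p) :
  adj C = C -> dotR (residual As y X) (meas As (X *m C *m adj X)) = 0.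
Proof.
move=> hC; have := soc_first_order (X *m C).
rewrite adj_mul hC !mulmxA !dotR_meas innerD.
by move/eqP; rewrite -mulr2n mulrn_eq0 => /orP[// | /eqP].
Qed.

Lemma dotR_residual_gram m (Xs : 'M[F]_(d, m)) (Rm : 'M[F]_(p, m)) :
  let E := Xs - X *m Rm in
  dotR (residual As y X) (meas As (Xs *m adj Xs)) =
  dotR (residual As y X) (meas As (E *m adj E)).
Proof.
move=> E; have -> : Xs = E + X *m Rm by rewrite subrK.
have -> : (E + X *m Rm) *m adj (E + X *m Rm) =
    E *m adj E + (X *m adj (E *m adj Rm) + E *m adj Rm *m adj X) +
    X *m (Rm *m adj Rm) *m adj X.
  by rewrite adjD !adj_mul !adjK mulmxDl !mulmxDr !mulmxA !addrA [_ + _ *m adj E]addrAC.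
rewrite !dotR_meas 2!innerD -!dotR_meas soc_first_order soc_first_order_herm.
  by rewrite !addr0.
by rewrite adj_mul adjK.
Qed.

Lemma sqnorm_meas_err (Zs : 'M[F]_d) (xi : 'I_n -> R) m
    (Xs : 'M[F]_(d, m)) (Rm : 'M[F]_(p, m)) :
  y = (fun i => meas As Zs i + xi i) -> Zs = Xs *m adj Xs ->
  let D := meas As (X *m adj X - Zs) in
  let E := Xs - X *m Rm in
  sqnorm D = dotR xi D + dotR (residual As y X) (meas As (E *m adj E)).
Proof.
move=> hy hZ D E.
have D_eq i : D i = xi i - residual As y X i.
  by rewrite /D /residual hy /Defs.meas innerB; ring.
have residual_D : dotR (residual As y X) D =
    - dotR (residual As y X) (meas As (E *m adj E)).
  have := soc_first_order_herm (adj1 p); rewrite mulmx1 => orth_XX.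
  rewrite /D dotR_meas innerB -!dotR_meas orth_XX.
  by rewrite hZ (dotR_residual_gram Xs Rm) sub0r.
have -> : sqnorm D = dotR xi D - dotR (residual As y X) D.
  by rewrite /sqnorm /dotR -sumrB; apply: eq_bigr => i _; rewrite {1}D_eq mulrBl.
by rewrite residual_D opprK.
Qed.

Hypothesis As_psd : forall i, psd (As i).

Lemma soc_rank_one m (E : 'M[F]_(d, m)) (j : 'I_m) (k : 'I_p) :
  2 * dotR (residual As y X) (meas As (E *m delta_mx j j *m adj (E *m delta_mx j j))) <=
  4 * dotR (meas As (E *m delta_mx j j *m adj (E *m delta_mx j j)))
           (meas As (X *m delta_mx k k *m adj (X *m delta_mx k k))).
Proof.
rewrite -(outer_rank_one E j k).
set U := E *m delta_mx j k; set Xk := X *m delta_mx k k.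
apply: le_trans (soc_second_order U) _.
rewrite /sqnorm /dotR mulr_sumr; apply: ler_sum => i _.
have herm_Ai := (As_psd i).1.
have UX : hform (As i) U X = hform (As i) U Xk.
  have UE : U *m delta_mx k k = U by rewrite /U -mulmxA mul_delta_mx.
  by rewrite -{1}UE hform_mulr adj_delta.
rewrite /Defs.meas inner_symprod // UX !inner_hform //.
have := hform_CauchySchwarz U Xk (As_psd i); rewrite expr2; lra.
Qed.

Lemma soc_trace_bound m (E : 'M[F]_(d, m)) :
  2 * p%:R * dotR (residual As y X) (meas As (E *m adj E)) <=
  4 * dotR (meas As (E *m adj E)) (meas As (X *m adj X)).
Proof.
rewrite -[E *m adj E]sum_outer_cols -[X *m adj X]sum_outer_cols !meas_sum.
exact: dotR_sum_pairs_le (soc_rank_one E).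
Qed.

Lemma sqnorm_meas_err_le (Zs : 'M[F]_d) (xi : 'I_n -> R) m
    (Xs : 'M[F]_(d, m)) (Rm : 'M[F]_(p, m)) :
  y = (fun i => meas As Zs i + xi i) -> Zs = Xs *m adj Xs ->
  sqnorm (meas As (X *m adj X - Zs)) <=
  dotR xi (meas As (X *m adj X - Zs)) +
  2 / (p%:R + 2) * dotR y (meas As ((Xs - X *m Rm) *m adj (Xs - X *m Rm))).
Proof.
move=> hy hZ; rewrite (sqnorm_meas_err Rm hy hZ) lerD2l.
have := soc_trace_bound (Xs - X *m Rm); set s := meas As _.
have -> : dotR s (meas As (X *m adj X)) = dotR y s - dotR (residual As y X) s.
  by rewrite /dotR -sumrB; apply: eq_bigr => i _; rewrite /residual; ring.
move: (dotR (residual As y X) s) (dotR y s) => S1 Sy trace_bound.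
have p2_gt0 : 0 < p%:R + 2 :> R by rewrite ltr_wpDl.
by rewrite mulrAC ler_pdivlMr //; nra.
Qed.

End SecondOrderCritical.

Lemma vdot_ge0 d (v : 'cV[F]_d) : 0 <= reF ((adj v *m v) 0 0).
Proof. by rewrite mxE re_sum; apply: sumr_ge0 => l _; rewrite !mxE. Qed.

Lemma vnorm_ge0 d (v : 'cV[F]_d) : 0 <= vnorm v.
Proof. exact: sqrtr_ge0. Qed.

Lemma vnorm_sqr d (v : 'cV[F]_d) : vnorm v ^+ 2 = reF ((adj v *m v) 0 0).
Proof. by rewrite sqr_sqrtr // vdot_ge0. Qed.

Lemma psd1 d : psd (1%:M : 'M[F]_d).
Proof.
split; first exact: adj1.
by move=> v; rewrite mulmx1 vdot_ge0.
Qed.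

Lemma re_vdot_le d (a b : 'cV[F]_d) : reF ((adj a *m b) 0 0) <= vnorm a * vnorm b.
Proof.
have := hform_CauchySchwarz a b (psd1 d).
rewrite /hform !mulmx1 /mxtrace !big_ord1 => cs.
rewrite -sqrtrM ?vdot_ge0 //; apply: le_trans (ler_norm _) _.
by rewrite -sqrtr_sqr ler_sqrt // mulr_ge0 ?vdot_ge0.
Qed.

Lemma vnormZ d c (v : 'cV[F]_d) :
  vnorm (c *: v) = Num.sqrt (reF (conjF c * c)) * vnorm v.
Proof.
rewrite /Defs.vnorm adjZ -scalemxAl -scalemxAr scalerA mxE [in LHS]normsq_real.
by rewrite re_embM sqrtrM ?re_normsq_ge0.
Qed.

Lemma vnorm_embZ d t (v : 'cV[F]_d) : 0 <= t -> vnorm (embF t *: v) = t * vnorm v.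
Proof.
move=> t_ge0; rewrite /Defs.vnorm adj_embZ -scalemxAl -scalemxAr !mxE !re_embM.
by rewrite mulrA -expr2 sqrtrM ?sqr_ge0 // sqrtr_sqr ger0_norm.
Qed.

Lemma normsq_re_vdot_le d (a v : 'cV[F]_d) :
  reF (conjF ((adj a *m v) 0 0) * (adj a *m v) 0 0) <= vnorm a ^+ 2 * vnorm v ^+ 2.
Proof.
set w := (adj a *m v) 0 0; have cs := re_vdot_le (w *: a) v.
rewrite vnormZ adjZ -scalemxAl mxE -/w in cs.
have s_sqr := sqr_sqrtr (re_normsq_ge0 w).
have := sqr_ge0 (vnorm a * vnorm v - Num.sqrt (reF (conjF w * w))).
by nra.
Qed.

Lemma opnorm_has_ubound d (M : 'M[F]_d) :
  has_ubound [set vnorm (M *m v) | v in [set v : 'cV[F]_d | vnorm v = 1]].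
Proof.
exists (Num.sqrt (\sum_i vnorm (adj (row i M)) ^+ 2)) => _ [v /= v_unit <-].
rewrite [leLHS]/Defs.vnorm ler_sqrt; last by apply: sumr_ge0 => i _; exact: sqr_ge0.
rewrite mxE re_sum; apply: ler_sum => i _.
have -> : adj (M *m v) 0 i * (M *m v) i 0 =
    conjF (row i (M *m v) 0 0) * row i (M *m v) 0 0 by rewrite !mxE.
rewrite row_mul; have := normsq_re_vdot_le (adj (row i M)) v.
by rewrite v_unit expr1n mulr1 adjK.
Qed.

Lemma vnorm_mul_le d (M : 'M[F]_d) (v : 'cV[F]_d) : 0 < vnorm v ->
  vnorm (M *m v) <= opnorm conjF reF M * vnorm v.
Proof.
move=> v_gt0; set c := (vnorm v)^-1.
have c_ge0 : 0 <= c by rewrite invr_ge0 ltW.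
have : vnorm (M *m (embF c *: v)) <= opnorm conjF reF M.
  apply: (ub_le_sup (opnorm_has_ubound M)); exists (embF c *: v) => //.
  by rewrite /= vnorm_embZ // mulVf // gt_eqF.
by rewrite -scalemxAr vnorm_embZ // mulrC ler_pdivrMr.
Qed.

(* [vnorm v = 0] need not force [v = 0] here; that case goes through
   Cauchy-Schwarz instead of the definition of [opnorm]. *)
Lemma quad_le_opnorm d (M : 'M[F]_d) (v : 'cV[F]_d) :
  reF ((adj v *m M *m v) 0 0) <= opnorm conjF reF M * vnorm v ^+ 2.
Proof.
rewrite -mulmxA; apply: le_trans (re_vdot_le v (M *m v)) _.
have [-> | v_neq0] := eqVneq (vnorm v) 0; first by rewrite !mul0r expr0n mulr0.
have v_gt0 : 0 < vnorm v by rewrite lt_def v_neq0 vnorm_ge0.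
apply: le_trans (ler_wpM2l (vnorm_ge0 v) (vnorm_mul_le M v_gt0)) _.
by rewrite mulrCA expr2.
Qed.

Lemma frob_sqr m r (E : 'M[F]_(m, r)) :
  frob conjF reF E ^+ 2 = \sum_j vnorm (col j E) ^+ 2.
Proof.
have inner_cols : inner E E = \sum_j vnorm (col j E) ^+ 2.
  rewrite /Defs.inner -(mulmx1 (adj E)) mxtrace_adj_cols re_sum.
  by apply: eq_bigr => j _; rewrite vnorm_sqr mulmx1.
by rewrite /frob inner_cols sqr_sqrtr // sumr_ge0 // => j _; exact: sqr_ge0.
Qed.

Lemma hform_le_opnorm d m (M : 'M[F]_d) (E : 'M[F]_(d, m)) :
  hform M E E <= opnorm conjF reF M * frob conjF reF E ^+ 2.
Proof.
rewrite /hform mxtrace_adj_cols re_sum frob_sqr mulr_sumr.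
by apply: ler_sum => j _; exact: quad_le_opnorm.
Qed.

Lemma measadj_hermitian n d (As : 'I_n -> 'M[F]_d) (z : 'I_n -> R) :
  (forall i, hermitian (As i)) -> hermitian (measadj embF As z).
Proof.
move=> herm_As; rewrite /Defs.hermitian adj_sum.
by apply: eq_bigr => i _; rewrite adj_embZ herm_As.
Qed.

Lemma dotR_meas_le_opnorm n d m (As : 'I_n -> 'M[F]_d) (z : 'I_n -> R)
    (E : 'M[F]_(d, m)) :
  (forall i, hermitian (As i)) ->
  dotR z (meas As (E *m adj E)) <=
  opnorm conjF reF (measadj embF As z) * frob conjF reF E ^+ 2.
Proof.
move=> herm_As; rewrite dotR_meas inner_hform; first exact: hform_le_opnorm.
exact: measadj_hermitian.
Qed.

Lemma lemma1_claim_holds : lemma1_claim conjF reF embF.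
Proof.
move=> d n r p As Zs xi y Xs X As_psd _ _ _ hy hZ X_crit Rm D E; split.
  by move: (sqnorm_meas_err_le X_crit As_psd Rm hy hZ).
rewrite lerD2l -!mulrA ler_wpM2l // mulrCA ler_wpM2l ?invr_ge0 ?addr_ge0 //.
by apply: dotR_meas_le_opnorm => i; case: (As_psd i).
Qed.

End ScalarField.

Theorem lemma1 (R : realType) :
  lemma1_claim (F := R) id id id /\
  lemma1_claim (F := R[i]) (@conjc R) (@Re R) (fun t : R => (t%:C)%C).
Proof.
split; first by apply: lemma1_claim_holds => // a; rewrite -expr2 Num.Theory.sqr_ge0.
apply: lemma1_claim_holds.
- exact: rmorphD.
- exact: rmorphM.
- exact: conjcK.
- exact: conjc_real.
- by move=> [a1 a2] [b1 b2].
- by move=> t [a1 a2] /=; simpc.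
- by case.
- by move=> [a1 a2] /=; simpc; rewrite Num.Theory.addr_ge0 // -expr2 Num.Theory.sqr_ge0.
- by move=> [a1 a2] /=; simpc; rewrite [a2 * a1]mulrC subrr.
Qed.
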